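(* Under the assumptions of Theorem 2 (the case $\varepsilon=0$), let $(u,v)$ be a classical solution on $[0,T)$ with $u>0$. Then $\int_0^1 v(x,t)\,dx=\overline v:=\int_0^1 v_0(x)\,dx$ for all $t\in[0,T)$, and there exists $C>0$ independent of $t$ and $T$ such that for all $t\in[0,T)$ \[ E(u,\alpha)(t)+\|(v-\overline v)(t)\|^2+\int_0^t\!\!\int_0^1\frac{(u_x)^2}{u}\,dx\,d\tau\le C . \]
   Context: Setting of Theorem 2: on $(0,1)\times(0,\infty)$, $u_t-(uv)_x=u_{xx}$, $v_t-u_x=0$, $(u,v)(x,0)=(u_0,v_0)(x)$, $u(0,t)=u(1,t)=\alpha(t)$ (no boundary condition on $v$); $u_0>0$, $(u_0,v_0)\in[H^2((0,1))]^2$ compatible with the boundary data; $\alpha$ smooth on $[0,\infty)$ with $\alpha\ge\underline\alpha>0$ and $\alpha'\in W^{1,1}(\mathbb{R}_+)$. The relative entropy is $E(u,\alpha)(t)=\int_0^1\big[(u\ln u-u)-(\alpha\ln\alpha-\alpha)-(u-\alpha)\ln\alpha\big]dx$. $\|\cdot\|$ is the $L^2((0,1))$ norm. *)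

From HB Require Import structures.
From mathcomp Require Import all_boot all_order all_algebra.
From mathcomp Require Import all_classical all_reals.
From mathcomp Require Import all_analysis.
From mathcomp Require Import Rstruct Rstruct_topology.
From Stdlib Require Import Reals.

Set Implicit Arguments.
Unset Strict Implicit.
Unset Printing Implicit Defensive.

Import Order.TTheory GRing.Theory Num.Theory.

Section LebesgueDefs.
Local Open Scope classical_set_scope.
Local Open Scope ring_scope.

Definition L1_on (D : set (measurableTypeR R)) (w : R -> R) : Prop :=
  @measurable_fun _ _ (measurableTypeR R) (measurableTypeR R) D w /\
  (\int[@lebesgue_measure R]_(x in D) (`|w x|)%:E < +oo)%E.

Definition L2_on (D : set (measurableTypeR R)) (w : R -> R) : Prop :=
  @measurable_fun _ _ (measurableTypeR R) (measurableTypeR R) D w /\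
  (\int[@lebesgue_measure R]_(x in D) ((w x) ^+ 2)%:E < +oo)%E.

(* f (its continuous representative on [0,1]) belongs to H^2((0,1)):
   f(x) = a + b x + \int_0^x \int_0^y w  on [0,1], with w in L^2((0,1)),
   i.e. f is C^1 on [0,1] with f' absolutely continuous and f'' = w in L^2. *)
Definition H2_01 (f : R -> R) : Prop :=
  exists (a b : R) (w : R -> R),
    L2_on `[0%R, 1%R] w /\
    forall x : R, (0 <= x <= 1)%R ->
      f x = a + b * x +
        Rintegral (@lebesgue_measure R) `[0%R, x]
          (fun y => Rintegral (@lebesgue_measure R) `[0%R, y] w).

Definition L1_Rplus (w : R -> R) : Prop := L1_on `[0%R, +oo[ w.

End LebesgueDefs.

From Coquelicot Require Import Coquelicot.
Open Scope R_scope.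

(* alpha is smooth (C^infinity); by Seeley extension this is equivalent to
   smoothness on [0, oo) as only values on [0, oo) are ever used. *)
Definition smooth (f : R -> R) : Prop :=
  forall (n : nat) (t : R), ex_derive (Derive_n f n) t.

Definition cont_on (f : R -> R -> R) (D : R -> R -> Prop) : Prop :=
  forall x t, D x t ->
    filterlim (fun p : R * R => f (fst p) (snd p))
      (within (fun p : R * R => D (fst p) (snd p)) (locally (x, t)))
      (locally (f x t)).

Definition Qcl (T : R) (x t : R) : Prop := 0 <= x <= 1 /\ 0 <= t < T.
Definition Qop (T : R) (x t : R) : Prop := 0 < x < 1 /\ 0 < t < T.

(* Classical solution on [0,T) of
     u_t - (u v)_x = u_xx,  v_t - u_x = 0  on (0,1) x (0,T),
     (u,v)(x,0) = (u0,v0)(x),  u(0,t) = u(1,t) = alpha(t),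
   with u > 0.  ux, vx are the (continuous up to the boundary) x-derivatives. *)
Definition classical_solution (alpha u0 v0 : R -> R) (T : R)
    (u v ux vx : R -> R -> R) : Prop :=
  cont_on u (Qcl T) /\ cont_on v (Qcl T) /\
  cont_on ux (Qcl T) /\ cont_on vx (Qcl T) /\
  (forall x t, 0 < x < 1 -> 0 <= t < T ->
     is_derive (fun y => u y t) x (ux x t) /\
     is_derive (fun y => v y t) x (vx x t)) /\
  (exists ut vt uxx : R -> R -> R,
     cont_on ut (Qop T) /\ cont_on vt (Qop T) /\ cont_on uxx (Qop T) /\
     forall x t, Qop T x t ->
       is_derive (fun s => u x s) t (ut x t) /\
       is_derive (fun s => v x s) t (vt x t) /\
       is_derive (fun y => ux y t) x (uxx x t) /\
       ut x t - (ux x t * v x t + u x t * vx x t) = uxx x t /\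
       vt x t - ux x t = 0) /\
  (forall x, 0 <= x <= 1 -> u x 0 = u0 x /\ v x 0 = v0 x) /\
  (forall t, 0 <= t < T -> u 0 t = alpha t /\ u 1 t = alpha t) /\
  (forall x t, Qcl T x t -> 0 < u x t).

Definition ent_density (w a : R) : R :=
  (w * ln w - w) - (a * ln a - a) - (w - a) * ln a.

Definition rel_entropy (u : R -> R -> R) (alpha : R -> R) (t : R) : R :=
  RInt (fun x => ent_density (u x t) (alpha t)) 0 1.

Definition L2sq01 (f : R -> R) : R := RInt (fun x => (f x) ^ 2) 0 1.

(* Both claims are integrated balance laws.  The mass of v is conserved since
   v_t = u_x and u takes the same value alpha at both ends.  For the energy
   e = H(u | alpha) + (v - vbar)^2 / 2 a direct computation along the
   solution gives
     e_t = [(ln u - ln alpha)(u_x + u v) - vbar u]_x - u_x^2 / u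
           - (alpha' / alpha)(u - alpha),
   and the flux again vanishes at x = 0, 1.  The forcing term is bounded by
   |alpha'| (H / alow + 16) since |u - alpha| <= H(u | alpha) + 16 alpha, so
   Gronwall's inequality with the integrable weight |alpha'| bounds energy
   plus accumulated dissipation by a constant depending only on the data. *)

From Stdlib Require Import Reals Lra Psatz.
From Coquelicot Require Import Coquelicot.
From mathcomp Require all_boot all_order all_algebra all_classical all_reals all_analysis
  Rstruct Rstruct_topology measurable_realfun.
Open Scope R_scope.

(* Real-valued specialisations of Coquelicot's integral lemmas, so that the
   normed-module argument never has to be given by hand. *)

Lemma RI_Chasles (f : R -> R) a b c : ex_RInt f a b -> ex_RInt f b c ->
  RInt f a b + RInt f b c = RInt f a c.
Proof. exact (RInt_Chasles (V:=R_CompleteNormedModule) f a b c). Qed.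

Lemma RI_plus (f g : R -> R) a b : ex_RInt f a b -> ex_RInt g a b ->
  RInt (fun x => f x + g x) a b = RInt f a b + RInt g a b.
Proof. exact (RInt_plus (V:=R_CompleteNormedModule) f g a b). Qed.

Lemma RI_minus (f g : R -> R) a b : ex_RInt f a b -> ex_RInt g a b ->
  RInt (fun x => f x - g x) a b = RInt f a b - RInt g a b.
Proof. exact (RInt_minus (V:=R_CompleteNormedModule) f g a b). Qed.

Lemma RI_scal (f : R -> R) a b l : ex_RInt f a b ->
  RInt (fun x => l * f x) a b = l * RInt f a b.
Proof. exact (RInt_scal (V:=R_CompleteNormedModule) f a b l). Qed.

Lemma RI_const a b c : RInt (fun _ => c) a b = (b - a) * c.
Proof. exact (RInt_const (V:=R_CompleteNormedModule) a b c). Qed.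

Lemma RI_point (f : R -> R) a : RInt f a a = 0.
Proof. exact (RInt_point (V:=R_CompleteNormedModule) a f). Qed.

Lemma RI_ext (f g : R -> R) a b : a <= b ->
  (forall x, a <= x <= b -> f x = g x) -> RInt f a b = RInt g a b.
Proof.
intros Hab H. apply (RInt_ext (V:=R_CompleteNormedModule)).
intros x Hx. rewrite Rmin_left, Rmax_right in Hx by lra. apply H; lra.
Qed.

Lemma exRI_ext (f g : R -> R) a b : a <= b ->
  (forall x, a <= x <= b -> f x = g x) -> ex_RInt f a b -> ex_RInt g a b.
Proof.
intros Hab H. apply (ex_RInt_ext (V:=R_NormedModule)).
intros x Hx. rewrite Rmin_left, Rmax_right in Hx by lra. apply H; lra.
Qed.

Lemma exRI_cont_on (f : R -> R) a b : a <= b ->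
  (forall x, a <= x <= b -> continuity_pt f x) -> ex_RInt f a b.
Proof.
intros Hab H. apply (ex_RInt_continuous (V:=R_CompleteNormedModule)).
intros z Hz. apply continuity_pt_filterlim. apply H.
rewrite Rmin_left, Rmax_right in Hz by lra. exact Hz.
Qed.

Lemma exRI_cont (f : R -> R) a b : (forall x, continuity_pt f x) -> ex_RInt f a b.
Proof.
intros H. apply (ex_RInt_continuous (V:=R_CompleteNormedModule)).
intros z _. apply continuity_pt_filterlim. apply H.
Qed.

Lemma RI_le (f g : R -> R) a b : a <= b -> ex_RInt f a b -> ex_RInt g a b ->
  (forall x, a <= x <= b -> f x <= g x) -> RInt f a b <= RInt g a b.
Proof. intros Hab Hf Hg H. apply RInt_le; auto. intros; apply H; lra. Qed.

Lemma RI_ge0 (f : R -> R) a b : a <= b -> ex_RInt f a b ->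
  (forall x, a <= x <= b -> 0 <= f x) -> 0 <= RInt f a b.
Proof. intros Hab Hf H. apply RInt_ge_0; auto. intros; apply H; lra. Qed.

Lemma RI_diff_bound (f g : R -> R) a b M : a <= b -> ex_RInt f a b -> ex_RInt g a b ->
  (forall x, a <= x <= b -> Rabs (f x - g x) <= M) ->
  Rabs (RInt f a b - RInt g a b) <= (b - a) * M.
Proof.
intros Hab Hf Hg H. rewrite <- RI_minus by auto.
apply abs_RInt_le_const; auto. apply (ex_RInt_minus (V:=R_NormedModule)); auto.
Qed.

Lemma RI_upper_derive (h : R -> R) x : (forall y, continuity_pt h y) ->
  is_derive (fun s => RInt h 0 s) x (h x).
Proof.
intros Hc. apply (is_derive_RInt h _ 0 x).
- apply filter_forall. intros b. apply (RInt_correct (V:=R_CompleteNormedModule)).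
  apply exRI_cont; auto.
- apply continuity_pt_filterlim; apply Hc.
Qed.

Lemma zero_of_eps (D K : R) : (forall eps, 0 < eps -> Rabs D <= K * eps) -> D = 0.
Proof.
intros H. destruct (Req_dec D 0) as [|Hn]; auto. exfalso.
assert (Hp : 0 < Rabs D) by (apply Rabs_pos_lt; auto).
pose proof (Rabs_pos K).
specialize (H (Rabs D / (2 * (Rabs K + 1))) ltac:(apply Rdiv_lt_0_compat; lra)).
assert (K * (Rabs D / (2 * (Rabs K + 1))) <= Rabs K * (Rabs D / (2 * (Rabs K + 1)))).
{ apply Rmult_le_compat_r. apply Rlt_le, Rdiv_lt_0_compat; lra. apply RRle_abs. }
assert (Rabs K * (Rabs D / (2 * (Rabs K + 1))) < Rabs D).
{ apply Rmult_lt_reg_r with (2 * (Rabs K + 1)). lra. field_simplify; try lra. nra. }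
lra.
Qed.

Lemma small_parameter (d K eps : R) : 0 < d -> 0 <= K -> 0 < eps ->
  exists η, 0 < η <= d /\ η * K <= eps.
Proof.
intros Hd HK He.
assert (Hq : 0 < eps / (K + 1)) by (apply Rdiv_lt_0_compat; lra).
set (η := Rmin d (eps / (K + 1))).
assert (H1 : η <= d) by apply Rmin_l. assert (H2 : η <= eps / (K + 1)) by apply Rmin_r.
assert (H0 : 0 < η) by (apply Rmin_pos; lra).
exists η. split; [lra|].
apply Rle_trans with (eps / (K + 1) * (K + 1)).
- apply Rle_trans with (η * (K + 1)). nra. apply Rmult_le_compat_r; lra.
- right. field. lra.
Qed.

Section ContOnAlgebra.
Variable D : R -> R -> Prop.

Lemma cont_on_op2 (h : R -> R -> R) (f g : R -> R -> R) :
  (forall a b, filterlim (fun z : R * R => h (fst z) (snd z))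
                 (filter_prod (locally a) (locally b)) (locally (h a b))) ->
  cont_on f D -> cont_on g D -> cont_on (fun x t => h (f x t) (g x t)) D.
Proof.
intros Hh Hf Hg x t Hxt.
apply (filterlim_comp_2 (fun p : R * R => f (fst p) (snd p))
  (fun p : R * R => g (fst p) (snd p)) h (G := locally (f x t)) (H := locally (g x t)));
  auto.
Qed.

Lemma cont_on_comp1 (φ : R -> R) f : cont_on f D ->
  (forall x t, D x t -> continuity_pt φ (f x t)) -> cont_on (fun x t => φ (f x t)) D.
Proof.
intros Hf Hφ x t Hxt.
apply (filterlim_comp _ _ _ (fun p : R * R => f (fst p) (snd p)) φ _ (locally (f x t))).
- apply Hf; auto.
- apply continuity_pt_filterlim. apply Hφ; auto.
Qed.

Lemma cont_on_plus f g : cont_on f D -> cont_on g D -> cont_on (fun x t => f x t + g x t) D.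
Proof. apply (cont_on_op2 Rplus). exact (filterlim_plus (V:=R_NormedModule)). Qed.

Lemma cont_on_mult f g : cont_on f D -> cont_on g D -> cont_on (fun x t => f x t * g x t) D.
Proof. apply (cont_on_op2 Rmult). exact (filterlim_mult (K:=R_AbsRing)). Qed.

Lemma cont_on_minus f g : cont_on f D -> cont_on g D -> cont_on (fun x t => f x t - g x t) D.
Proof.
intros Hf Hg. apply (cont_on_plus f (fun x t => - g x t) Hf).
apply (cont_on_comp1 Ropp g Hg). intros; apply continuity_pt_opp, continuity_pt_id.
Qed.

Lemma cont_on_const c : cont_on (fun _ _ => c) D.
Proof. intros x t _. apply filterlim_const. Qed.

Lemma cont_on_pow2 f : cont_on f D -> cont_on (fun x t => (f x t) ^ 2) D.
Proof.
intros Hf. apply (cont_on_comp1 (fun z => z ^ 2) f Hf).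
intros. apply derivable_continuous_pt, derivable_pt_pow.
Qed.

Lemma cont_on_inv f : cont_on f D -> (forall x t, D x t -> f x t <> 0) ->
  cont_on (fun x t => / f x t) D.
Proof.
intros Hf Hn. apply (cont_on_comp1 Rinv f Hf). intros x t Hxt.
exact (continuity_pt_inv (fun z => z) (f x t) (continuity_pt_id _) (Hn x t Hxt)).
Qed.

Lemma cont_on_time (h : R -> R) : (forall x t, D x t -> continuity_pt h t) ->
  cont_on (fun _ t => h t) D.
Proof.
intros Hh x t Hxt.
apply (filterlim_comp _ _ _ (fun p : R * R => snd p) h _ (locally t)).
- intros P [eps HP]. exists eps. intros y [_ Hy] _. apply HP. exact Hy.
- apply continuity_pt_filterlim. apply (Hh x t Hxt).
Qed.

Lemma cont_on_mono f (D' : R -> R -> Prop) : cont_on f D ->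
  (forall x t, D' x t -> D x t) -> cont_on f D'.
Proof.
intros Hf HD x t Hxt P HP. specialize (Hf x t (HD x t Hxt) P HP).
unfold filtermap, within in *. revert Hf. apply filter_imp.
intros p H1 H2. apply H1, HD, H2.
Qed.

Lemma cont_on_eps (f : R -> R -> R) x t : cont_on f D -> D x t ->
  forall eps, 0 < eps -> exists del, 0 < del /\ forall y s, D y s ->
    Rabs (y - x) < del -> Rabs (s - t) < del -> Rabs (f y s - f x t) < eps.
Proof.
intros Hf Hxt eps He.
destruct (Hf x t Hxt (fun z => Rabs (z - f x t) < eps)) as [d Hd].
{ exists (mkposreal eps He). intros z Hz. exact Hz. }
exists d. split. apply cond_pos.
intros y s Hys Hy Hs. apply (Hd (y, s)); [split; assumption | exact Hys].
Qed.

End ContOnAlgebra.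

Ltac cont_on_tac := repeat (first [ assumption | apply cont_on_minus | apply cont_on_plus
  | apply cont_on_mult | apply cont_on_const | apply cont_on_pow2 ]).

Lemma Qop_Qcl T x t : Qop T x t -> Qcl T x t.
Proof. unfold Qop, Qcl. lra. Qed.

Lemma Qop_near T x t : Qop T x t -> exists r : posreal,
  forall y s, Rabs (y - x) < r -> Rabs (s - t) < r -> Qop T y s.
Proof.
intros [Hx Ht].
assert (Hr : 0 < Rmin (Rmin x (1 - x)) (Rmin t (T - t))) by (repeat apply Rmin_pos; lra).
exists (mkposreal _ Hr). intros y s Hy Hs. simpl in Hy, Hs.
pose proof (Rmin_l (Rmin x (1 - x)) (Rmin t (T - t))).
pose proof (Rmin_r (Rmin x (1 - x)) (Rmin t (T - t))).
pose proof (Rmin_l x (1 - x)). pose proof (Rmin_r x (1 - x)).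
pose proof (Rmin_l t (T - t)). pose proof (Rmin_r t (T - t)).
revert Hy Hs. unfold Qop, Rabs. destruct (Rcase_abs (y - x)), (Rcase_abs (s - t)); intros; lra.
Qed.

Lemma cont_on_Qop_interior (h : R -> R -> R) T x t : cont_on h (Qop T) -> Qop T x t ->
  continuity_2d_pt h x t.
Proof.
intros Hh Hxt eps.
destruct (cont_on_eps _ h x t Hh Hxt eps (cond_pos eps)) as [d [Hd H]].
destruct (Qop_near T x t Hxt) as [r Hr].
assert (Hm : 0 < Rmin d r) by (apply Rmin_pos; [lra | apply cond_pos]).
exists (mkposreal _ Hm). intros y s Hy Hs. simpl in Hy, Hs.
pose proof (Rmin_l d r). pose proof (Rmin_r d r).
apply H; try lra. apply Hr; lra.
Qed.

(* Clamping [clamp a b x] (projection onto [a, b]) turns a function that is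
   continuous on a closed rectangle into one continuous on the whole plane,
   without changing it on the rectangle. *)
Definition clamp (a b x : R) := Rmax a (Rmin b x).

Lemma clamp_in a b x : a <= b -> a <= clamp a b x <= b.
Proof. intros. unfold clamp, Rmax, Rmin. repeat destruct Rle_dec; lra. Qed.

Lemma clamp_id a b x : a <= x <= b -> clamp a b x = x.
Proof. intros. unfold clamp, Rmax, Rmin. repeat destruct Rle_dec; lra. Qed.

Lemma clamp_lip a b x y : a <= b -> Rabs (clamp a b x - clamp a b y) <= Rabs (x - y).
Proof.
intros. unfold clamp, Rmax, Rmin. repeat destruct Rle_dec;
  unfold Rabs; repeat destruct Rcase_abs; lra.
Qed.

Definition cont2 (f : R -> R -> R) := forall x t, continuity_2d_pt f x t.

Lemma clamp_cont (f : R -> R -> R) (D : R -> R -> Prop) a b c d :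
  cont_on f D -> a <= b -> c <= d ->
  (forall x t, a <= x <= b -> c <= t <= d -> D x t) ->
  cont2 (fun x t => f (clamp a b x) (clamp c d t)).
Proof.
intros Hf Hab Hcd HD x t eps.
destruct (cont_on_eps D f (clamp a b x) (clamp c d t) Hf
  (HD _ _ (clamp_in a b x Hab) (clamp_in c d t Hcd)) eps (cond_pos eps)) as [del [Hdel H]].
exists (mkposreal del Hdel). intros y s Hy Hs. simpl in *.
apply H. apply HD; apply clamp_in; auto.
- eapply Rle_lt_trans. apply clamp_lip; auto. exact Hy.
- eapply Rle_lt_trans. apply clamp_lip; auto. exact Hs.
Qed.

Lemma slice_x_cont {f : R -> R -> R} {x t : R} : continuity_2d_pt f x t ->
  continuity_pt (fun y => f y t) x.
Proof.
intros H. apply continuity_pt_filterlim. intros P [eps HP].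
destruct (H eps) as [d Hd]. exists d. intros y Hy. apply HP.
apply Hd. exact Hy. rewrite Rminus_eq_0, Rabs_R0. apply cond_pos.
Qed.

Lemma slice_t_cont {f : R -> R -> R} {x t : R} : continuity_2d_pt f x t ->
  continuity_pt (fun s => f x s) t.
Proof.
intros H. apply continuity_pt_filterlim. intros P [eps HP].
destruct (H eps) as [d Hd]. exists d. intros y Hy. apply HP.
apply Hd. rewrite Rminus_eq_0, Rabs_R0. apply cond_pos. exact Hy.
Qed.

Lemma cont2d_swap {f : R -> R -> R} {x t : R} : continuity_2d_pt f x t ->
  continuity_2d_pt (fun t x => f x t) t x.
Proof. intros H eps. destruct (H eps) as [d Hd]. exists d. intros u v Hu Hv. apply Hd; auto. Qed.

(* A continuous function is bounded on a compact rectangle: march across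
   [a, b] in steps of half the modulus of uniform continuity for eps = 1. *)
Lemma cont2_bounded (f : R -> R -> R) a b c d : cont2 f -> a <= b -> c <= d ->
  exists M, 0 <= M /\ forall x y, a <= x <= b -> c <= y <= d -> Rabs (f x y) <= M.
Proof.
intros Hf Hab Hcd.
destruct (uniform_continuity_2d f a b c d (fun x y _ _ => Hf x y) (mkposreal 1 Rlt_0_1))
  as [del Hdel].
pose proof (cond_pos del) as Hdel0.
destruct (continuity_ab_maj (fun y => Rabs (f a y)) c d Hcd) as [ym [Hym _]].
{ intros y _. exact (continuity_pt_comp (fun s => f a s) Rabs y (slice_t_cont (Hf a y)) (Rcontinuity_abs _)). }
set (M0 := Rabs (f a ym)).
assert (Hstep : forall n : nat, forall x y, a <= x <= b -> c <= y <= d ->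
   x <= a + INR n * (del / 2) -> Rabs (f x y) <= M0 + INR n).
{ induction n as [|n IH]; intros x y Hx Hy Hxn.
  - simpl in *. replace x with a by lra. rewrite Rplus_0_r. apply Hym. exact Hy.
  - rewrite S_INR in *.
    destruct (Rle_dec x (a + INR n * (del/2))) as [Hle|Hgt].
    + specialize (IH x y Hx Hy Hle). lra.
    + set (x' := Rmax a (x - del/2)).
      assert (Hx' : a <= x' <= b) by (unfold x', Rmax; destruct Rle_dec; lra).
      assert (Hx'n : x' <= a + INR n * (del/2)).
      { unfold x', Rmax. pose proof (pos_INR n). destruct Rle_dec; nra. }
      specialize (IH x' y Hx' Hy Hx'n).
      assert (Hd : Rabs (f x y - f x' y) < 1).
      { apply (Hdel x' y x y Hx' Hy Hx Hy).
        - unfold x', Rmax. destruct Rle_dec; unfold Rabs; destruct Rcase_abs; lra.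
        - rewrite Rminus_eq_0, Rabs_R0. apply cond_pos. }
      pose proof (Rabs_triang (f x' y) (f x y - f x' y)).
      replace (f x' y + (f x y - f x' y)) with (f x y) in * by ring. lra. }
destruct (INR_archimed (del/2) (b - a)) as [n Hn]; [lra|].
exists (M0 + INR n). split.
- pose proof (pos_INR n). pose proof (Rabs_pos (f a ym)). unfold M0. lra.
- intros x y Hx Hy. apply Hstep; auto. lra.
Qed.

Lemma cont2_param_integral (f : R -> R -> R) a b : cont2 f -> a <= b ->
  forall s0, continuity_pt (fun s => RInt (fun x => f x s) a b) s0.
Proof.
intros Hf Hab s0. apply continuity_pt_filterlim. intros P [eps HP].
assert (Hp : 0 < eps / (b - a + 1)) by (apply Rdiv_lt_0_compat; [apply cond_pos | lra]).
destruct (uniform_continuity_2d f a b (s0 - 1) (s0 + 1) (fun x y _ _ => Hf x y)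
  (mkposreal _ Hp)) as [del Hdel].
assert (Hr : 0 < Rmin del 1) by (apply Rmin_pos; [apply cond_pos | lra]).
exists (mkposreal _ Hr). intros s Hs. apply HP.
change (Rabs (s - s0) < Rmin del 1) in Hs.
change (Rabs (RInt (fun x => f x s) a b - RInt (fun x => f x s0) a b) < eps).
assert (Hs1 : Rabs (s - s0) < del) by (eapply Rlt_le_trans; [exact Hs | apply Rmin_l]).
assert (Hs2 : Rabs (s - s0) < 1) by (eapply Rlt_le_trans; [exact Hs | apply Rmin_r]).
eapply Rle_lt_trans.
- apply RI_diff_bound with (M := eps / (b - a + 1)); auto;
    try (apply exRI_cont; intros x; apply slice_x_cont, Hf).
  intros x Hx. left. apply (Hdel x s0 x s); try exact Hx.
  + split; lra.
  + revert Hs2. unfold Rabs. destruct Rcase_abs; intros; lra.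
  + rewrite Rminus_eq_0, Rabs_R0. apply cond_pos.
  + exact Hs1.
- apply Rlt_le_trans with ((b - a + 1) * (eps / (b - a + 1))).
  + apply Rmult_lt_compat_r. exact Hp. lra.
  + right. field. lra.
Qed.

Section StripIntegrals.
Variables (T : R) (h : R -> R -> R).
Hypothesis Ch : cont_on h (Qcl T).

Lemma Qcl_clamped t : 0 <= t < T ->
  cont2 (fun x s => h (clamp 0 1 x) (clamp 0 t s)).
Proof. intros Ht. apply (clamp_cont h (Qcl T)); auto; try lra. intros; unfold Qcl; lra. Qed.

Lemma exRI_Qcl a b t : 0 <= a <= b -> b <= 1 -> 0 <= t < T ->
  ex_RInt (fun x => h x t) a b.
Proof.
intros Hab Hb Ht. apply (exRI_ext (fun x => h (clamp 0 1 x) (clamp 0 t t))); [lra | |].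
- intros x Hx. rewrite !clamp_id by lra. reflexivity.
- apply exRI_cont. intros x. exact (slice_x_cont (Qcl_clamped t Ht x t)).
Qed.

Lemma Qcl_time_cont x σ : 0 <= x <= 1 -> 0 < σ < T -> continuity_pt (fun s => h x s) σ.
Proof.
intros Hx Hσ. set (t2 := (σ + T) / 2).
apply (continuity_pt_locally_ext (fun s => h (clamp 0 1 x) (clamp 0 t2 s)) _ (Rmin σ (t2 - σ))).
- apply Rmin_pos; unfold t2; lra.
- intros s Hs. unfold Rdist in Hs.
  pose proof (Rmin_l σ (t2 - σ)). pose proof (Rmin_r σ (t2 - σ)).
  rewrite !clamp_id; [reflexivity | | lra].
  revert Hs. unfold Rabs. destruct Rcase_abs; intros; unfold t2 in *; lra.
- exact (slice_t_cont (Qcl_clamped t2 ltac:(unfold t2; lra) x σ)).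
Qed.

Lemma Qcl_integral_time_cont a b σ : 0 <= a <= b -> b <= 1 -> 0 < σ < T ->
  continuity_pt (fun s => RInt (fun x => h x s) a b) σ.
Proof.
intros Hab Hb Hσ. set (t2 := (σ + T) / 2).
apply (continuity_pt_locally_ext
  (fun s => RInt (fun x => h (clamp 0 1 x) (clamp 0 t2 s)) a b) _ (Rmin σ (t2 - σ))).
- apply Rmin_pos; unfold t2; lra.
- intros s Hs. unfold Rdist in Hs.
  pose proof (Rmin_l σ (t2 - σ)). pose proof (Rmin_r σ (t2 - σ)).
  apply RI_ext; [lra|]. intros x Hx.
  rewrite !clamp_id; [reflexivity | | lra].
  revert Hs. unfold Rabs. destruct Rcase_abs; intros; unfold t2 in *; lra.
- apply cont2_param_integral; [apply Qcl_clamped; unfold t2 | ]; lra.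
Qed.

Lemma param_Qcl t : 0 <= t < T -> exists W, (forall σ, continuity_pt W σ) /\
  forall σ, 0 <= σ <= t -> W σ = RInt (fun x => h x σ) 0 1.
Proof.
intros Ht. exists (fun σ => RInt (fun x => h (clamp 0 1 x) (clamp 0 t σ)) 0 1). split.
- apply cont2_param_integral; [apply Qcl_clamped, Ht | lra].
- intros σ Hσ. apply RI_ext; [lra|]. intros x Hx. rewrite !clamp_id by lra. reflexivity.
Qed.

Lemma exRI_param t : 0 <= t < T -> ex_RInt (fun σ => RInt (fun x => h x σ) 0 1) 0 t.
Proof.
intros Ht. destruct (param_Qcl t Ht) as [W [CW EW]].
apply (exRI_ext W); [lra | | apply exRI_cont; auto]. intros; apply EW; lra.
Qed.

End StripIntegrals.

Lemma strip_bound (H : R -> R -> R) M η σ : cont2 H -> 0 <= η <= 1/2 ->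
  (forall x, 0 <= x <= 1 -> Rabs (H x σ) <= M) ->
  Rabs (RInt (fun x => H x σ) 0 1 - RInt (fun x => H x σ) η (1 - η)) <= 2 * η * M.
Proof.
intros CH Hη HM.
assert (Ex : forall a b, ex_RInt (fun x => H x σ) a b)
  by (intros; apply exRI_cont; intros x; apply slice_x_cont, CH).
rewrite <- (RI_Chasles _ 0 η 1), <- (RI_Chasles _ η (1 - η) 1) by auto.
replace (RInt (fun x => H x σ) 0 η + (RInt (fun x => H x σ) η (1 - η)
  + RInt (fun x => H x σ) (1 - η) 1) - RInt (fun x => H x σ) η (1 - η))
  with (RInt (fun x => H x σ) 0 η + RInt (fun x => H x σ) (1 - η) 1) by ring.
eapply Rle_trans. apply Rabs_triang.
assert (Rabs (RInt (fun x => H x σ) 0 η) <= (η - 0) * M)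
  by (apply abs_RInt_le_const; auto; try lra; intros; apply HM; lra).
assert (Rabs (RInt (fun x => H x σ) (1 - η) 1) <= (1 - (1 - η)) * M)
  by (apply abs_RInt_le_const; auto; try lra; intros; apply HM; lra).
lra.
Qed.

(* Net flux out of the strip [a, b] at time σ, for a balance law
   F_t = P_x - G. *)
Definition strip_flux (P G : R -> R -> R) (a b σ : R) : R :=
  P b σ - P a σ - RInt (fun x => G x σ) a b.

Lemma strip_flux_cont P G a b : cont2 P -> cont2 G -> a <= b ->
  forall σ, continuity_pt (strip_flux P G a b) σ.
Proof.
intros CP CG Hab σ. unfold strip_flux.
repeat apply continuity_pt_minus; try apply slice_t_cont, CP.
apply cont2_param_integral; auto.
Qed.

Lemma strip_flux_shrink (P G : R -> R -> R) Mg eps η σ : cont2 G -> 0 <= η <= 1/2 ->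
  Rabs (P (1 - η) σ - P 1 σ) <= eps -> Rabs (P η σ - P 0 σ) <= eps ->
  (forall x, 0 <= x <= 1 -> Rabs (G x σ) <= Mg) ->
  Rabs (strip_flux P G η (1 - η) σ - strip_flux P G 0 1 σ) <= 2 * eps + 2 * η * Mg.
Proof.
intros CG Hη H1 H0 HMg. unfold strip_flux.
pose proof (strip_bound G Mg η σ CG Hη HMg) as HG.
apply Rabs_le_between in H1. apply Rabs_le_between in H0. apply Rabs_le_between in HG.
apply Rabs_le. lra.
Qed.

Lemma strip_flux_bound (P G : R -> R -> R) MP Mg σ : cont2 G ->
  Rabs (P 1 σ) <= MP -> Rabs (P 0 σ) <= MP ->
  (forall x, 0 <= x <= 1 -> Rabs (G x σ) <= Mg) ->
  Rabs (strip_flux P G 0 1 σ) <= 2 * MP + Mg.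
Proof.
intros CG H1 H0 HMg. unfold strip_flux.
assert (HG : Rabs (RInt (fun x => G x σ) 0 1) <= (1 - 0) * Mg).
{ apply abs_RInt_le_const; [lra | | intros; apply HMg; lra].
  apply exRI_cont. intros x. apply slice_x_cont, CG. }
apply Rabs_le_between in H1. apply Rabs_le_between in H0. apply Rabs_le_between in HG.
apply Rabs_le. lra.
Qed.

(* The error committed by shrinking the rectangle is controlled by uniform
   continuity and boundedness on the compact rectangle. *)
Lemma rectangle_closure (τ : R) (F P G : R -> R -> R) :
  0 < τ -> cont2 F -> cont2 P -> cont2 G ->
  (forall a b s, 0 < a < b -> b < 1 -> 0 < s <= τ ->
     RInt (fun x => F x τ) a b - RInt (fun x => F x s) a b =
     RInt (strip_flux P G a b) s τ) ->
  RInt (fun x => F x τ) 0 1 - RInt (fun x => F x 0) 0 1 =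
  RInt (strip_flux P G 0 1) 0 τ.
Proof.
intros Hτ CF CP CG Hint.
set (Φ := fun a b σ => RInt (fun x => F x σ) a b).
assert (ExQ : forall a b s t, a <= b -> ex_RInt (strip_flux P G a b) s t)
  by (intros; apply exRI_cont, strip_flux_cont; auto).
destruct (cont2_bounded F 0 1 0 τ CF) as [Mf [HMf0 HMf]]; try lra.
destruct (cont2_bounded G 0 1 0 τ CG) as [Mg [HMg0 HMg]]; try lra.
destruct (cont2_bounded P 0 1 0 τ CP) as [MP [HMP0 HMP]]; try lra.
apply Rminus_diag_uniq. apply (zero_of_eps _ (4 + 2 * τ)). intros eps He.
destruct (uniform_continuity_2d P 0 1 0 τ (fun x y _ _ => CP x y) (mkposreal eps He))
  as [d1 Hd1].
destruct (uniform_continuity_2d F 0 1 0 τ (fun x y _ _ => CF x y) (mkposreal eps He))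
  as [d2 Hd2].
simpl in Hd1, Hd2. pose proof (cond_pos d1). pose proof (cond_pos d2).
destruct (small_parameter (Rmin (1/4) (d1/2)) (4 * Mf + 2 * τ * Mg) eps) as [η [Hη Hηe]];
  try (apply Rmin_pos); try nra.
destruct (small_parameter (Rmin τ (d2/2)) (2 * MP + Mg) eps) as [s [Hs Hse]];
  try (apply Rmin_pos); try nra.
pose proof (Rmin_l (1/4) (d1/2)). pose proof (Rmin_r (1/4) (d1/2)).
pose proof (Rmin_l τ (d2/2)). pose proof (Rmin_r τ (d2/2)).
assert (Z := Hint η (1 - η) s ltac:(lra) ltac:(lra) ltac:(lra)).
assert (B1 : forall σ, 0 <= σ <= τ -> Rabs (Φ 0 1 σ - Φ η (1 - η) σ) <= 2 * η * Mf)
  by (intros; apply strip_bound; auto; try lra; intros; apply HMf; lra).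
assert (B2 : Rabs (Φ 0 1 s - Φ 0 1 0) <= (1 - 0) * eps).
{ apply RI_diff_bound; try lra; try (apply exRI_cont; intros x; apply slice_x_cont, CF).
  intros x Hx. left. apply (Hd2 x 0 x s); try lra.
  - rewrite Rminus_eq_0, Rabs_R0. lra.
  - rewrite Rminus_0_r, Rabs_pos_eq; lra. }
assert (B3 : Rabs (RInt (strip_flux P G η (1 - η)) s τ - RInt (strip_flux P G 0 1) s τ)
             <= (τ - s) * (2 * eps + 2 * η * Mg)).
{ apply RI_diff_bound; try lra; try (apply ExQ; lra).
  intros σ Hσ. apply strip_flux_shrink; auto; try lra; try (intros; apply HMg; lra).
  - left. apply (Hd1 1 σ (1 - η) σ); try lra.
    + replace (1 - η - 1) with (- η) by ring. rewrite Rabs_Ropp, Rabs_pos_eq; lra.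
    + rewrite Rminus_eq_0, Rabs_R0. lra.
  - left. apply (Hd1 0 σ η σ); try lra.
    + rewrite Rminus_0_r, Rabs_pos_eq; lra.
    + rewrite Rminus_eq_0, Rabs_R0. lra. }
assert (B4 : Rabs (RInt (strip_flux P G 0 1) 0 s) <= (s - 0) * (2 * MP + Mg)).
{ apply abs_RInt_le_const; try lra; try (apply ExQ; lra).
  intros σ Hσ. apply strip_flux_bound; auto; try (apply HMP; lra). intros; apply HMg; lra. }
rewrite <- (RI_Chasles _ 0 s τ) by (apply ExQ; lra).
pose proof (B1 τ ltac:(lra)) as B1t. pose proof (B1 s ltac:(lra)) as B1s.
unfold Φ in *.
repeat match goal with H : Rabs _ <= _ |- _ => apply Rabs_le_between in H end.
assert (0 <= η * Mg) by nra. assert ((τ - s) * (2 * eps + 2 * η * Mg) <= 2 * τ * eps + 2 * τ * η * Mg) by nra.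
apply Rabs_le. lra.
Qed.

Section BalanceLaw.
Variables (T : R) (f ft Ψ ψx g : R -> R -> R).
Hypotheses (Cf : cont_on f (Qcl T)) (CΨ : cont_on Ψ (Qcl T)) (Cg : cont_on g (Qcl T))
  (Cft : cont_on ft (Qop T)) (Cψx : cont_on ψx (Qop T)).
Hypothesis balance : forall x t, Qop T x t ->
  is_derive (fun s => f x s) t (ft x t) /\ is_derive (fun y => Ψ y t) x (ψx x t) /\
  ft x t = ψx x t - g x t.

Lemma strip_time_derive a b σ : 0 < a < b -> b < 1 -> 0 < σ < T ->
  is_derive (fun s => RInt (fun x => f x s) a b) σ (RInt (fun x => ft x σ) a b).
Proof.
intros Hab Hb Hσ.
assert (Hin : forall x, a <= x <= b -> Qop T x σ) by (intros; unfold Qop; lra).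
assert (Hp := is_derive_RInt_param (fun σ x => f x σ) a b σ).
rewrite Rmin_left, Rmax_right in Hp by lra.
replace (RInt (fun x => ft x σ) a b) with (RInt (fun x => Derive (fun u => f x u) σ) a b).
2:{ apply RI_ext; [lra|]. intros x Hx. apply is_derive_unique, balance, Hin, Hx. }
assert (Hr : 0 < Rmin σ (T - σ)) by (apply Rmin_pos; lra).
pose proof (Rmin_l σ (T - σ)). pose proof (Rmin_r σ (T - σ)).
apply Hp.
- exists (mkposreal _ Hr). intros y Hy x Hx. change (Rabs (y - σ) < Rmin σ (T - σ)) in Hy.
  exists (ft x y). apply balance. revert Hy. unfold Qop, Rabs. destruct Rcase_abs; intros; lra.
- intros x Hx. apply continuity_2d_pt_ext_loc with (f := fun u v => ft v u).
  + destruct (Qop_near T x σ (Hin x Hx)) as [r Hxr]. exists r. intros u v Hu Hv.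
    symmetry. apply is_derive_unique, balance, Hxr; auto.
  + apply cont2d_swap, (cont_on_Qop_interior ft T x σ Cft (Hin x Hx)).
- exists (mkposreal _ Hr). intros y Hy. change (Rabs (y - σ) < Rmin σ (T - σ)) in Hy.
  apply (exRI_Qcl T f Cf); try lra. revert Hy. unfold Rabs. destruct Rcase_abs; intros; lra.
Qed.

Lemma strip_flux_identity a b σ : 0 < a < b -> b < 1 -> 0 < σ < T ->
  RInt (fun x => ft x σ) a b = strip_flux Ψ g a b σ.
Proof.
intros Hab Hb Hσ.
assert (Hin : forall x, a <= x <= b -> Qop T x σ) by (intros; unfold Qop; lra).
rewrite (RI_ext _ (fun x => ψx x σ - g x σ)) by (try lra; intros; apply balance, Hin; auto).
rewrite RI_minus; [| | apply (exRI_Qcl T g Cg); lra].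
2:{ apply exRI_cont_on; [lra|]. intros x Hx.
    exact (slice_x_cont (cont_on_Qop_interior ψx T x σ Cψx (Hin x Hx))). }
unfold strip_flux. f_equal.
assert (Hi := is_RInt_derive (V:=R_CompleteNormedModule) (fun y => Ψ y σ) (fun y => ψx y σ) a b).
rewrite Rmin_left, Rmax_right in Hi by lra.
apply is_RInt_unique, Hi.
- intros x Hx. apply balance, Hin, Hx.
- intros x Hx. apply continuity_pt_filterlim.
  exact (slice_x_cont (cont_on_Qop_interior ψx T x σ Cψx (Hin x Hx))).
Qed.

Lemma strip_balance τ a b s : 0 < a < b -> b < 1 -> 0 < s <= τ -> τ < T ->
  RInt (fun x => f x τ) a b - RInt (fun x => f x s) a b = RInt (strip_flux Ψ g a b) s τ.
Proof.
intros Hab Hb Hs Hτ.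
assert (Hi := is_RInt_derive (V:=R_CompleteNormedModule)
  (fun σ => RInt (fun x => f x σ) a b) (strip_flux Ψ g a b) s τ).
rewrite Rmin_left, Rmax_right in Hi by lra.
symmetry. apply is_RInt_unique, Hi.
- intros σ Hσ. rewrite <- strip_flux_identity by lra. apply strip_time_derive; lra.
- intros σ Hσ. apply continuity_pt_filterlim. unfold strip_flux.
  repeat apply continuity_pt_minus.
  + apply (Qcl_time_cont T Ψ CΨ); lra.
  + apply (Qcl_time_cont T Ψ CΨ); lra.
  + apply (Qcl_integral_time_cont T g Cg); lra.
Qed.

Lemma balance_law τ : 0 <= τ < T ->
  RInt (fun x => f x τ) 0 1 - RInt (fun x => f x 0) 0 1 = RInt (strip_flux Ψ g 0 1) 0 τ.
Proof.
intros Hτ. destruct (Req_dec τ 0) as [->|Hτ0]; [rewrite RI_point; ring|].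
set (τ2 := (τ + T) / 2).
set (cl := fun h : R -> R -> R => fun x σ => h (clamp 0 1 x) (clamp 0 τ2 σ)).
assert (Ccl : forall h, cont_on h (Qcl T) -> cont2 (cl h))
  by (intros; apply (Qcl_clamped T); auto; unfold τ2; lra).
assert (Ecl : forall h x σ, 0 <= x <= 1 -> 0 <= σ <= τ -> cl h x σ = h x σ)
  by (intros; unfold cl; rewrite !clamp_id by (unfold τ2; lra); reflexivity).
assert (EI : forall h a b σ, 0 <= a <= b -> b <= 1 -> 0 <= σ <= τ ->
  RInt (fun x => cl h x σ) a b = RInt (fun x => h x σ) a b)
  by (intros; apply RI_ext; [lra | intros; apply Ecl; lra]).
assert (EQ : forall a b s, 0 <= a <= b -> b <= 1 -> 0 <= s <= τ ->
  RInt (strip_flux (cl Ψ) (cl g) a b) s τ = RInt (strip_flux Ψ g a b) s τ).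
{ intros a b s Ha Hb Hs. apply RI_ext; [lra|]. intros σ Hσ.
  unfold strip_flux. rewrite !Ecl, EI by lra. reflexivity. }
rewrite <- !(EI f), <- EQ by lra.
apply rectangle_closure; try lra; try apply Ccl; auto.
intros a b s Hab Hb Hs. rewrite !EI, EQ by lra. apply strip_balance; lra.
Qed.

End BalanceLaw.

Lemma ln_continuous x : 0 < x -> continuity_pt ln x.
Proof. intros. apply derivable_continuous_pt. exists (/ x). apply derivable_pt_lim_ln; auto. Qed.

Lemma ln_le_sub1 x : 0 < x -> ln x <= x - 1.
Proof. intros. pose proof (exp_ineq1_le (ln x)). rewrite exp_ln in H0 by auto. lra. Qed.

(* The relative entropy density is nonnegative (convexity of w ln w). *)
Lemma ent_nonneg w a : 0 < w -> 0 < a -> 0 <= ent_density w a.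
Proof.
intros Hw Ha. unfold ent_density.
pose proof (ln_le_sub1 (a / w) ltac:(apply Rdiv_lt_0_compat; auto)) as Hl.
rewrite ln_div in Hl by auto.
assert (w * (ln a - ln w) <= w * (a / w - 1)) by (apply Rmult_le_compat_l; lra).
replace (w * (a / w - 1)) with (a - w) in H by (field; lra).
nra.
Qed.

Lemma two_le_ln9 : 2 <= ln 9.
Proof.
rewrite <- (ln_exp 2). apply ln_le. apply exp_pos.
replace 2 with (1 + 1) by ring. rewrite exp_plus.
pose proof exp_le_3. pose proof (exp_pos 1). nra.
Qed.

(* The entropy controls the L^1 distance to the boundary value:
   |w - a| <= H(w | a) + 16 a  (split according to w <= a, w <= 9a, w > 9a). *)
Lemma ent_controls_L1 w a : 0 < w -> 0 < a -> Rabs (w - a) <= ent_density w a + 16 * a.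
Proof.
intros Hw Ha. pose proof (ent_nonneg w a Hw Ha).
destruct (Rle_dec w a).
- rewrite Rabs_left1 by lra. lra.
- rewrite Rabs_pos_eq by lra.
  destruct (Rle_dec w (9 * a)); [lra|].
  unfold ent_density.
  assert (2 <= ln w - ln a).
  { rewrite <- ln_div by auto. eapply Rle_trans. apply two_le_ln9. apply ln_le. lra.
    apply Rmult_le_reg_r with a; auto. unfold Rdiv. rewrite Rmult_assoc, Rinv_l by lra. lra. }
  nra.
Qed.

Lemma ent_density_derive (w a : R -> R) w' a' s : 0 < w s -> 0 < a s ->
  is_derive w s w' -> is_derive a s a' ->
  is_derive (fun s => ent_density (w s) (a s)) s
    ((ln (w s) - ln (a s)) * w' - (a' / a s) * (w s - a s)).
Proof.
intros Hw Ha Dw Da. unfold ent_density. auto_derive.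
- repeat split; auto; try (exists w'; exact Dw); try (exists a'; exact Da).
- replace (Derive (fun x => w x) s) with w' by (symmetry; apply is_derive_unique, Dw).
  replace (Derive (fun x => a x) s) with a' by (symmetry; apply is_derive_unique, Da).
  field. lra.
Qed.

Lemma half_square_derive (w : R -> R) w' c s : is_derive w s w' ->
  is_derive (fun s => /2 * (w s - c) ^ 2) s ((w s - c) * w').
Proof.
intros Dw. auto_derive.
- exists w'; exact Dw.
- replace (Derive (fun x => w x) s) with w' by (symmetry; apply is_derive_unique, Dw). field.
Qed.

Lemma entropy_flux_derive (w z p : R -> R) (w' z' p' c1 c2 y : R) : 0 < w y ->
  is_derive w y w' -> is_derive z y z' -> is_derive p y p' ->
  is_derive (fun y => (ln (w y) - c1) * (z y + w y * p y) - c2 * w y) y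
   ((w' / w y) * (z y + w y * p y) + (ln (w y) - c1) * (z' + w' * p y + w y * p') - c2 * w').
Proof.
intros Hw Dw Dz Dp. auto_derive.
- repeat split; auto; try (exists w'; exact Dw); try (exists z'; exact Dz);
    try (exists p'; exact Dp).
- replace (Derive (fun x => w x) y) with w' by (symmetry; apply is_derive_unique, Dw).
  replace (Derive (fun x => z x) y) with z' by (symmetry; apply is_derive_unique, Dz).
  replace (Derive (fun x => p x) y) with p' by (symmetry; apply is_derive_unique, Dp).
  field. lra.
Qed.

(* Proof: G(s) = e^{-K(s)} (A + Z(s)) - B(s) is nonincreasing. *)
Lemma gronwall (Y w k β : R -> R) A t : 0 <= t ->
  (forall σ, continuity_pt w σ) -> (forall σ, continuity_pt k σ) ->
  (forall σ, continuity_pt β σ) -> (forall σ, 0 <= k σ) -> (forall σ, 0 <= β σ) ->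
  (forall σ, 0 <= σ <= t -> Y σ <= A + RInt (fun r => Rabs (w r)) 0 σ) ->
  (forall σ, 0 <= σ <= t -> Rabs (w σ) <= k σ * Y σ + β σ) ->
  Y t <= (A + RInt β 0 t) * exp (RInt k 0 t).
Proof.
intros Ht Cw Ck Cb Hk Hb HY Hw.
set (aw := fun r => Rabs (w r)).
assert (Caw : forall σ, continuity_pt aw σ)
  by (intros σ; exact (continuity_pt_comp w Rabs σ (Cw σ) (Rcontinuity_abs _))).
set (Z := fun s => RInt aw 0 s). set (K := fun s => RInt k 0 s). set (B := fun s => RInt β 0 s).
assert (DZ := fun x => RI_upper_derive aw x Caw).
assert (DK := fun x => RI_upper_derive k x Ck).
assert (DB := fun x => RI_upper_derive β x Cb).
assert (K0 : forall σ, 0 <= σ -> 0 <= K σ)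
  by (intros; apply RI_ge0; [lra | apply exRI_cont; auto | intros; apply Hk]).
set (G := fun s => exp (- K s) * (A + Z s) - B s).
set (G' := fun s => exp (- K s) * (- k s * (A + Z s) + aw s) - β s).
assert (DG : forall σ, is_derive G σ (G' σ)).
{ intros σ. unfold G, G'. auto_derive.
  - repeat split; auto. exists (k σ); apply DK. exists (aw σ); apply DZ. exists (β σ); apply DB.
  - replace (Derive (fun x => K x) σ) with (k σ) by (symmetry; apply is_derive_unique, DK).
    replace (Derive (fun x => Z x) σ) with (aw σ) by (symmetry; apply is_derive_unique, DZ).
    replace (Derive (fun x => B x) σ) with (β σ) by (symmetry; apply is_derive_unique, DB).
    ring. }
assert (G'neg : forall σ, 0 <= σ <= t -> G' σ <= 0).
{ intros σ Hσ. unfold G'.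
  assert (aw σ <= k σ * (A + Z σ) + β σ).
  { eapply Rle_trans. apply Hw; auto. specialize (HY σ Hσ). specialize (Hk σ).
    fold aw in HY. fold (Z σ) in HY. nra. }
  assert (exp (- K σ) <= 1).
  { rewrite <- exp_0. destruct (Req_dec (K σ) 0) as [E|E]. rewrite E, Ropp_0. lra.
    left. apply exp_increasing. pose proof (K0 σ ltac:(lra)). lra. }
  pose proof (exp_pos (- K σ)). specialize (Hb σ). nra. }
assert (Gt : G t <= G 0).
{ destruct (Req_dec t 0) as [->|Htn]; [lra|].
  destruct (MVT_cor2 G G' 0 t ltac:(lra)) as [c [Hc1 Hc2]].
  { intros c _. apply is_derive_Reals, DG. }
  assert (G' c <= 0) by (apply G'neg; lra). nra. }
unfold G, Z, K, B in Gt. rewrite !RI_point, Ropp_0, exp_0 in Gt.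
fold (Z t) (K t) (B t) in Gt.
assert (HYt := HY t ltac:(lra)). fold aw (Z t) in HYt.
assert (Ep := exp_pos (K t)).
assert (E1 : exp (- K t) * exp (K t) = 1)
  by (rewrite <- exp_plus; replace (- K t + K t) with 0 by ring; apply exp_0).
assert (A + Z t <= (A + B t) * exp (K t)).
{ replace (A + Z t) with (exp (- K t) * (A + Z t) * exp (K t))
    by (rewrite Rmult_comm, <- Rmult_assoc, (Rmult_comm (exp (K t))), E1; ring).
  apply Rmult_le_compat_r; lra. }
fold (B t) (K t). lra.
Qed.

Lemma gronwall_bound_mono A B K M K' : B <= M -> K <= K' -> 0 <= M ->
  (A + B) * exp K <= (Rabs A + M) * exp K'.
Proof.
intros HB HK HM.
assert (exp K <= exp K') by (destruct (Req_dec K K') as [->|]; [lra | left; apply exp_increasing; lra]).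
pose proof (exp_pos K). pose proof (exp_pos K'). pose proof (Rle_abs A). pose proof (Rabs_pos A).
destruct (Rle_dec (A + B) 0).
- assert ((A + B) * exp K <= 0) by nra.
  assert (0 <= (Rabs A + M) * exp K') by (apply Rmult_le_pos; lra). lra.
- apply Rle_trans with ((A + B) * exp K'); [apply Rmult_le_compat_l; lra|].
  apply Rmult_le_compat_r; lra.
Qed.

Lemma abs_continuous (w : R -> R) : (forall x, continuity_pt w x) ->
  forall x, continuity_pt (fun s => Rabs (w s)) x.
Proof. intros Hw x. exact (continuity_pt_comp w Rabs x (Hw x) (Rcontinuity_abs _)). Qed.

Lemma abs_primitive_derive (w : R -> R) : (forall x, continuity_pt w x) ->
  forall x, derivable_pt_lim (fun t => RInt (fun s => Rabs (w s)) 0 t) x (Rabs (w x)).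
Proof.
intros Hw x. apply is_derive_Reals, (RI_upper_derive (fun s => Rabs (w s))), abs_continuous, Hw.
Qed.

Lemma abs_primitive_continuous (w : R -> R) : (forall x, continuity_pt w x) ->
  forall x, continuity_pt (fun t => RInt (fun s => Rabs (w s)) 0 t) x.
Proof. intros Hw x. apply derivable_continuous_pt. eexists. apply abs_primitive_derive, Hw. Qed.

Module LebesgueTransfer.
Import all_boot all_order all_algebra all_classical all_reals all_analysis
  Rstruct Rstruct_topology measurable_realfun.
Import Order.TTheory GRing.Theory Num.Theory numFieldNormedType.Exports.
Local Open Scope classical_set_scope.
Local Open Scope ring_scope.

Lemma derivable_pt_lim_derive1 (F : R^o -> R^o) (x l : R) :
  Ranalysis1.derivable_pt_lim F x l -> derive.derivable F x 1 /\ derive1 F x = l.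
Proof.
move=> H.
have C : (fun h : R^o => h^-1 *: ((F \o shift x) (h *: (1:R^o)) - F x)) @ 0^' --> (l : R^o).
  apply/cvgrPdist_lt => e /Rstruct.RltP e0.
  have [d Hd] := H e e0.
  near=> h.
  have hn0 : h != 0 by near: h; exact: nbhs_dnbhs_neq.
  have hd : `|h| < pos d.
    near: h; apply: nbhs_dnbhs; apply: (@nbhs0_lt _ R^o); apply/Rstruct.RltP; exact: cond_pos.
  have hn0' : h <> 0%coqR by move/eqP: hn0.
  have hd' : (Rabs h < d)%coqR by rewrite RabsE; exact: Rstruct.RltP hd.
  move: (Hd h hn0' hd') => /Rstruct.RltP; rewrite RabsE /=.
  have E : (h%:A : R^o) = h by rewrite /GRing.scale /= mulr1.
  by rewrite E [h + x]addrC distrC /Rdiv RmultE mulrC.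
split; first by apply/cvgP; exact: C.
rewrite derive1E /derive; exact: cvg_lim C.
Unshelve. all: by end_near.
Qed.

(* By the fundamental theorem of calculus, the Riemann primitive of |w| on
   [0, t] equals its Lebesgue integral there, which is bounded by the
   (finite) integral over [0, +oo). *)
Lemma L1_primitive_bound (w : R -> R) : (forall x, continuity_pt w x) -> L1_Rplus w ->
  exists L : R, (0 <= L)%coqR /\ forall t, (0 <= t)%coqR ->
    (RInt (fun s => Rabs (w s)) 0 t <= L)%coqR.
Proof.
move=> wc [mw fin].
pose I := (\int[@lebesgue_measure R]_(x in `[0%R, +oo[) (`|w x|)%:E)%E.
have I0 : (0 <= I)%E by apply: integral_ge0 => x _; rewrite lee_fin normr_ge0.
have Ifin : I \is a fin_num by rewrite ge0_fin_numE.
exists (fine I); split; first by apply/Rstruct.RleP; apply: fine_ge0.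
move=> t t0.
pose F : R^o -> R^o := fun t => RInt (fun s => Rabs (w s)) 0 t.
have F0 : F 0 = 0 by rewrite /F RI_point.
case: (Rle_lt_or_eq_dec _ _ t0) => [tpos|<-]; last first.
  by rewrite -/(F 0) F0; apply/Rstruct.RleP; apply: fine_ge0.
have Fd x : derive.derivable F x 1 /\ derive1 F x = Rabs (w x).
  by apply: derivable_pt_lim_derive1; apply: abs_primitive_derive.
have Fc x : {for x, continuous F}.
  by apply/continuity_pt_cvg; apply: abs_primitive_continuous.
have gc x : {for x, continuous (fun s => Rabs (w s))}.
  by apply/continuity_pt_cvg; apply: abs_continuous.
have tpos' : 0 < t by apply/Rstruct.RltP.
have h1 : {within `[0, t], continuous fun s : R => Rabs (w s)}.
  by apply: continuous_in_subspaceT => x _; apply: gc.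
have h2 : derivable_oo_LRcontinuous F 0 t.
  split.
  + by move=> x _; case: (Fd x).
  + by apply: cvg_at_right_filter; apply: Fc.
  + by apply: cvg_at_left_filter; apply: Fc.
have E := continuous_FTC2 tpos' h1 h2 (fun x _ => proj2 (Fd x)).
rewrite F0 sube0 in E.
have sub : (\int[@lebesgue_measure R]_(x in `[0%R, t]) (Rabs (w x))%:E <= I)%E.
  rewrite /I; under eq_integral do rewrite RabsE.
  apply: ge0_subset_integral => //.
  - apply/measurable_EFinP. exact: (measurableT_comp (@normr_measurable _ _) mw).
  - by move=> x; rewrite /= !in_itv /= => /andP[-> _].
rewrite E -(fineK Ifin) lee_fin in sub.
exact: (Rstruct.RleP sub).
Qed.

End LebesgueTransfer.

Section SolutionEstimates.
Variables (alpha alpha' u0 v0 : R -> R) (alow L T : R) (u v ux vx ut vt uxx : R -> R -> R).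
Hypotheses (alow_pos : 0 < alow) (alpha_low : forall s, 0 <= s -> alow <= alpha s)
  (alpha_deriv : forall s, is_derive alpha s (alpha' s))
  (alpha'_cont : forall s, continuity_pt alpha' s)
  (alpha'_L1 : forall t, 0 <= t -> RInt (fun s => Rabs (alpha' s)) 0 t <= L).
Hypotheses (Cu : cont_on u (Qcl T)) (Cv : cont_on v (Qcl T))
  (Cux : cont_on ux (Qcl T)) (Cvx : cont_on vx (Qcl T))
  (Cut : cont_on ut (Qop T)) (Cvt : cont_on vt (Qop T)) (Cuxx : cont_on uxx (Qop T)).
Hypothesis x_derivatives : forall x t, 0 < x < 1 -> 0 <= t < T ->
  is_derive (fun y => u y t) x (ux x t) /\ is_derive (fun y => v y t) x (vx x t).
Hypothesis equations : forall x t, Qop T x t ->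
  is_derive (fun s => u x s) t (ut x t) /\ is_derive (fun s => v x s) t (vt x t) /\
  is_derive (fun y => ux y t) x (uxx x t) /\
  ut x t - (ux x t * v x t + u x t * vx x t) = uxx x t /\ vt x t - ux x t = 0.
Hypothesis initial : forall x, 0 <= x <= 1 -> u x 0 = u0 x /\ v x 0 = v0 x.
Hypothesis boundary : forall t, 0 <= t < T -> u 0 t = alpha t /\ u 1 t = alpha t.
Hypothesis u_pos : forall x t, Qcl T x t -> 0 < u x t.

Lemma alpha_pos s : 0 <= s -> 0 < alpha s.
Proof. intros Hs. pose proof (alpha_low s Hs). lra. Qed.

Lemma Qcl_time x s : Qcl T x s -> 0 <= s.
Proof. unfold Qcl. lra. Qed.

Lemma Qcl_to_Qop h : cont_on h (Qcl T) -> cont_on h (Qop T).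
Proof. intros Ch. apply (cont_on_mono _ h _ Ch (Qop_Qcl T)). Qed.

Lemma alpha_continuous s : continuity_pt alpha s.
Proof.
apply continuity_pt_filterlim. apply (ex_derive_continuous (K:=R_AbsRing) (V:=R_NormedModule)).
exists (alpha' s). exact (alpha_deriv s).
Qed.

Lemma cont_alpha : cont_on (fun _ s => alpha s) (Qcl T).
Proof. apply cont_on_time. intros; apply alpha_continuous. Qed.

Lemma cont_ln_alpha : cont_on (fun _ s => ln (alpha s)) (Qcl T).
Proof.
apply cont_on_time. intros x s Hxs.
apply (continuity_pt_comp alpha ln s (alpha_continuous s)).
apply ln_continuous, alpha_pos, (Qcl_time x), Hxs.
Qed.

Lemma cont_alpha_ratio : cont_on (fun _ s => alpha' s * / alpha s) (Qcl T).
Proof.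
apply cont_on_time. intros x s Hxs. apply continuity_pt_div; auto using alpha_continuous.
pose proof (alpha_pos s (Qcl_time x s Hxs)). lra.
Qed.

Lemma cont_ln_u : cont_on (fun x s => ln (u x s)) (Qcl T).
Proof. apply cont_on_comp1; auto. intros. apply ln_continuous, u_pos; auto. Qed.

Lemma cont_inv_u : cont_on (fun x s => / u x s) (Qcl T).
Proof. apply cont_on_inv; auto. intros x s Hxs. pose proof (u_pos x s Hxs). lra. Qed.

(* v_t = u_x: the total mass of v is conserved, since u has the same value
   alpha at both ends. *)
Lemma mass_conservation t : 0 <= t < T -> RInt (fun x => v x t) 0 1 = RInt v0 0 1.
Proof.
intros Ht.
assert (Hbal : forall x s, Qop T x s -> is_derive (fun s => v x s) s (vt x s) /\
  is_derive (fun y => u y s) x (ux x s) /\ vt x s = ux x s - 0).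
{ intros x s Hxs. destruct (equations x s Hxs) as (_ & Dv & _ & _ & Ev).
  split; [exact Dv | split; [apply x_derivatives; unfold Qop in Hxs; lra | lra]]. }
assert (Hb := balance_law T v vt u ux (fun _ _ => 0) Cv Cu (cont_on_const _ 0) Cvt
  (Qcl_to_Qop ux Cux) Hbal t Ht).
rewrite (RI_ext (fun x => v x 0) v0) in Hb by (try lra; intros; apply initial; lra).
rewrite (RI_ext (strip_flux u (fun _ _ => 0) 0 1) (fun _ => 0)), RI_const in Hb.
- lra.
- lra.
- intros σ Hσ. unfold strip_flux. destruct (boundary σ) as [B0 B1]; [lra|].
  rewrite B0, B1, RI_const. ring.
Qed.

Definition energy (c x s : R) : R :=
  ent_density (u x s) (alpha s) + /2 * (v x s - c) ^ 2.
Definition energy_rate (c x s : R) : R :=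
  (ln (u x s) - ln (alpha s)) * ut x s - (alpha' s / alpha s) * (u x s - alpha s)
  + (v x s - c) * vt x s.
Definition entropy_flux (c x s : R) : R :=
  (ln (u x s) - ln (alpha s)) * (ux x s + u x s * v x s) - c * u x s.
Definition entropy_flux_x (c x s : R) : R :=
  (ux x s / u x s) * (ux x s + u x s * v x s)
  + (ln (u x s) - ln (alpha s)) * (uxx x s + ux x s * v x s + u x s * vx x s) - c * ux x s.
Definition dissipation (x s : R) : R := ux x s ^ 2 / u x s.
Definition forcing (x s : R) : R := alpha' s / alpha s * (u x s - alpha s).

Lemma energy_balance c x s : Qop T x s ->
  is_derive (fun s => energy c x s) s (energy_rate c x s) /\
  is_derive (fun y => entropy_flux c y s) x (entropy_flux_x c x s) /\
  energy_rate c x s = entropy_flux_x c x s - (dissipation x s + forcing x s).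
Proof.
intros Hxs. destruct (equations x s Hxs) as (Dut & Dvt & Duxx & Eu & Ev).
assert (Hus : 0 < u x s) by (apply u_pos, Qop_Qcl, Hxs).
assert (Has : 0 < alpha s) by (apply alpha_pos; unfold Qop in Hxs; lra).
destruct (x_derivatives x s) as [Dux Dvx]; try (unfold Qop in Hxs; lra).
split; [|split].
- apply (is_derive_plus (K:=R_AbsRing) (V:=R_NormedModule)
    (fun s => ent_density (u x s) (alpha s)) (fun s => /2 * (v x s - c) ^ 2)).
  + apply (ent_density_derive (fun s => u x s) alpha); auto.
  + apply (half_square_derive (fun s => v x s)); auto.
- apply (entropy_flux_derive (fun y => u y s) (fun y => ux y s) (fun y => v y s)); auto.
- unfold energy_rate, entropy_flux_x, dissipation, forcing.
  replace (ut x s) with (uxx x s + (ux x s * v x s + u x s * vx x s)) by lra.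
  replace (vt x s) with (ux x s) by lra.
  field. lra.
Qed.

Ltac leaf_facts :=
  pose proof cont_alpha; pose proof cont_ln_alpha; pose proof cont_alpha_ratio;
  pose proof cont_ln_u; pose proof cont_inv_u.

Lemma cont_entropy_density : cont_on (fun x s => ent_density (u x s) (alpha s)) (Qcl T).
Proof. leaf_facts. unfold ent_density. cont_on_tac. Qed.

Lemma cont_energy c : cont_on (energy c) (Qcl T).
Proof. pose proof cont_entropy_density. unfold energy. cont_on_tac. Qed.

Lemma cont_entropy_flux c : cont_on (entropy_flux c) (Qcl T).
Proof. leaf_facts. unfold entropy_flux. cont_on_tac. Qed.

Lemma cont_dissipation : cont_on dissipation (Qcl T).
Proof. leaf_facts. unfold dissipation, Rdiv. cont_on_tac. Qed.

Lemma cont_forcing : cont_on forcing (Qcl T).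
Proof. leaf_facts. unfold forcing, Rdiv. cont_on_tac. Qed.

Ltac interior_leaf_facts :=
  pose proof (Qcl_to_Qop _ cont_alpha); pose proof (Qcl_to_Qop _ cont_ln_alpha);
  pose proof (Qcl_to_Qop _ cont_alpha_ratio); pose proof (Qcl_to_Qop _ cont_ln_u);
  pose proof (Qcl_to_Qop _ cont_inv_u); pose proof (Qcl_to_Qop _ Cu);
  pose proof (Qcl_to_Qop _ Cv); pose proof (Qcl_to_Qop _ Cux); pose proof (Qcl_to_Qop _ Cvx).

Lemma cont_energy_rate c : cont_on (energy_rate c) (Qop T).
Proof. interior_leaf_facts. unfold energy_rate, Rdiv. cont_on_tac. Qed.

Lemma cont_entropy_flux_x c : cont_on (entropy_flux_x c) (Qop T).
Proof. interior_leaf_facts. unfold entropy_flux_x, Rdiv. cont_on_tac. Qed.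

(* The entropy flux vanishes across the boundary, where u = alpha, so the
   energy only decreases through dissipation and forcing. *)
Lemma energy_identity c t : 0 <= t < T ->
  RInt (fun x => energy c x t) 0 1 = RInt (fun x => energy c x 0) 0 1
    - RInt (fun σ => RInt (fun x => dissipation x σ + forcing x σ) 0 1) 0 t.
Proof.
intros Ht.
assert (Cg : cont_on (fun x s => dissipation x s + forcing x s) (Qcl T))
  by (apply cont_on_plus; [apply cont_dissipation | apply cont_forcing]).
assert (Hb := balance_law T (energy c) (energy_rate c) (entropy_flux c) (entropy_flux_x c) _
  (cont_energy c) (cont_entropy_flux c) Cg (cont_energy_rate c) (cont_entropy_flux_x c)
  (energy_balance c) t Ht).
assert (Hflux : RInt (strip_flux (entropy_flux c) (fun x s => dissipation x s + forcing x s) 0 1) 0 t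
  = RInt (fun σ => (-1) * RInt (fun x => dissipation x σ + forcing x σ) 0 1) 0 t).
{ apply RI_ext; [lra|]. intros σ Hσ. unfold strip_flux, entropy_flux.
  destruct (boundary σ) as [B0 B1]; [lra|]. rewrite B0, B1. ring. }
rewrite RI_scal in Hflux by apply (exRI_param T _ Cg t Ht).
lra.
Qed.

Definition entropy_at (s : R) : R := RInt (fun x => ent_density (u x s) (alpha s)) 0 1.

(* The forcing is controlled by the entropy itself (through the L^1 bound
   |u - alpha| <= H(u | alpha) + 16 alpha) with a weight |alpha'| / alow. *)
Lemma forcing_bound σ : 0 <= σ < T ->
  Rabs (RInt (fun x => forcing x σ) 0 1)
    <= / alow * Rabs (alpha' σ) * entropy_at σ + 16 * Rabs (alpha' σ).
Proof.
intros Hσ.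
assert (Has : 0 < alpha σ) by (apply alpha_pos; lra).
assert (Cum : cont_on (fun x s => u x s - alpha s) (Qcl T))
  by (pose proof cont_alpha; cont_on_tac).
assert (Cau : cont_on (fun x s => Rabs (u x s - alpha s)) (Qcl T))
  by (apply (cont_on_comp1 _ Rabs _ Cum); intros; apply Rcontinuity_abs).
assert (Cen16 : cont_on (fun x s => ent_density (u x s) (alpha s) + 16 * alpha s) (Qcl T))
  by (pose proof cont_entropy_density; pose proof cont_alpha; cont_on_tac).
assert (E0 : 0 <= entropy_at σ).
{ apply RI_ge0; [lra | apply (exRI_Qcl T _ cont_entropy_density); lra |].
  intros x Hx. apply ent_nonneg; auto. apply u_pos. unfold Qcl; lra. }
assert (B1 : Rabs (RInt (fun x => u x σ - alpha σ) 0 1) <= entropy_at σ + 16 * alpha σ).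
{ eapply Rle_trans. apply abs_RInt_le; [lra | apply (exRI_Qcl T _ Cum); lra].
  apply Rle_trans with (RInt (fun x => ent_density (u x σ) (alpha σ) + 16 * alpha σ) 0 1).
  - apply RI_le; [lra | apply (exRI_Qcl T _ Cau); lra | apply (exRI_Qcl T _ Cen16); lra |].
    intros x Hx. apply ent_controls_L1; auto. apply u_pos. unfold Qcl; lra.
  - rewrite RI_plus, RI_const; [unfold entropy_at; lra | |].
    + apply (exRI_Qcl T _ cont_entropy_density); lra.
    + apply (ex_RInt_const (V:=R_NormedModule)). }
unfold forcing. rewrite RI_scal by (apply (exRI_Qcl T _ Cum); lra).
rewrite Rabs_mult. unfold Rdiv. rewrite Rabs_mult, (Rabs_pos_eq (/ alpha σ))
  by (left; apply Rinv_0_lt_compat; auto).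
assert (Hinv : / alpha σ <= / alow) by (apply Rinv_le_contravar; auto; apply alpha_low; lra).
assert (Hia : 0 < / alpha σ) by (apply Rinv_0_lt_compat; auto).
pose proof (Rabs_pos (alpha' σ)).
pose proof (Rabs_pos (RInt (fun x => u x σ - alpha σ) 0 1)).
apply Rle_trans with (Rabs (alpha' σ) * / alpha σ * (entropy_at σ + 16 * alpha σ)).
- apply Rmult_le_compat_l; [apply Rmult_le_pos; lra | auto].
- replace (Rabs (alpha' σ) * / alpha σ * (entropy_at σ + 16 * alpha σ))
    with (Rabs (alpha' σ) * / alpha σ * entropy_at σ + 16 * Rabs (alpha' σ)) by (field; lra).
  assert (Rabs (alpha' σ) * / alpha σ * entropy_at σ <= / alow * Rabs (alpha' σ) * entropy_at σ).
  { apply Rmult_le_compat_r; auto. rewrite Rmult_comm. apply Rmult_le_compat_r; auto. }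
  lra.
Qed.

Lemma entropy_nonneg s : 0 <= s < T -> 0 <= entropy_at s.
Proof.
intros Hs. apply RI_ge0; [lra | apply (exRI_Qcl T _ cont_entropy_density); lra |].
intros x Hx. apply ent_nonneg; [apply u_pos; unfold Qcl; lra | apply alpha_pos; lra].
Qed.

Lemma dissipated_nonneg r : 0 <= r < T ->
  0 <= RInt (fun σ => RInt (fun x => dissipation x σ) 0 1) 0 r.
Proof.
intros Hr. apply RI_ge0; [lra | apply (exRI_param T _ cont_dissipation r Hr) |].
intros σ Hσ. apply RI_ge0; [lra | apply (exRI_Qcl T _ cont_dissipation); lra |].
intros x Hx. unfold dissipation. pose proof (u_pos x σ ltac:(unfold Qcl; lra)).
apply Rmult_le_pos; [apply pow2_ge_0 | left; apply Rinv_0_lt_compat; auto].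
Qed.

Lemma energy_split c r : 0 <= r < T ->
  RInt (fun x => energy c x r) 0 1 = entropy_at r + /2 * RInt (fun x => (v x r - c) ^ 2) 0 1.
Proof.
intros Hr. assert (Cvc : cont_on (fun x s => (v x s - c) ^ 2) (Qcl T)) by cont_on_tac.
unfold energy, entropy_at. rewrite RI_plus, RI_scal; try reflexivity.
- apply (exRI_Qcl T _ Cvc); lra.
- apply (exRI_Qcl T _ cont_entropy_density); lra.
- apply (ex_RInt_scal (V:=R_NormedModule)). apply (exRI_Qcl T _ Cvc); lra.
Qed.

Lemma energy_forcing_identity c r : 0 <= r < T ->
  RInt (fun x => energy c x r) 0 1 + RInt (fun σ => RInt (fun x => dissipation x σ) 0 1) 0 r
  = RInt (fun x => energy c x 0) 0 1 - RInt (fun σ => RInt (fun x => forcing x σ) 0 1) 0 r.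
Proof.
intros Hr. rewrite energy_identity by auto.
rewrite (RI_ext (fun σ => RInt (fun x => dissipation x σ + forcing x σ) 0 1)
  (fun σ => RInt (fun x => dissipation x σ) 0 1 + RInt (fun x => forcing x σ) 0 1)).
- rewrite RI_plus; [ring | apply (exRI_param T _ cont_dissipation r Hr)
                         | apply (exRI_param T _ cont_forcing r Hr)].
- lra.
- intros σ Hσ. apply RI_plus; [apply (exRI_Qcl T _ cont_dissipation)
                              | apply (exRI_Qcl T _ cont_forcing)]; lra.
Qed.

(* The a priori estimate: Gronwall's inequality applied to
   Y(r) = energy(r) + accumulated dissipation, whose growth is driven by the
   forcing, itself bounded by |alpha'| (Y / alow + 16). *)
Lemma energy_bound c t : 0 <= t < T ->
  entropy_at t + RInt (fun x => (v x t - c) ^ 2) 0 1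
    + RInt (fun σ => RInt (fun x => dissipation x σ) 0 1) 0 t
  <= 2 * ((Rabs (RInt (fun x => energy c x 0) 0 1) + 16 * L) * exp (L / alow)).
Proof.
intros Ht.
set (A := RInt (fun x => energy c x 0) 0 1).
set (Y := fun r => RInt (fun x => energy c x r) 0 1
                   + RInt (fun σ => RInt (fun x => dissipation x σ) 0 1) 0 r).
assert (Hv2 : forall r, 0 <= r < T -> 0 <= RInt (fun x => (v x r - c) ^ 2) 0 1).
{ intros r Hr. apply RI_ge0; [lra | | intros; apply pow2_ge_0].
  apply (exRI_Qcl T (fun x s => (v x s - c) ^ 2)); [cont_on_tac | lra | lra | lra]. }
assert (YE : forall r, 0 <= r <= t -> entropy_at r <= Y r).
{ intros r Hr. unfold Y. rewrite energy_split by lra.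
  pose proof (Hv2 r ltac:(lra)). pose proof (dissipated_nonneg r ltac:(lra)). lra. }
destruct (param_Qcl T forcing cont_forcing t Ht) as [Wc [CWc EWc]].
set (k := fun σ => / alow * Rabs (alpha' σ)).
set (β := fun σ => 16 * Rabs (alpha' σ)).
assert (Cab : forall σ, continuity_pt (fun σ => Rabs (alpha' σ)) σ)
  by (intros σ; exact (continuity_pt_comp alpha' Rabs σ (alpha'_cont σ) (Rcontinuity_abs _))).
assert (Gr : Y t <= (A + RInt β 0 t) * exp (RInt k 0 t)).
{ apply (gronwall Y Wc k β A t); try lra; auto.
  - intros σ. exact (continuity_pt_scal _ (/ alow) σ (Cab σ)).
  - intros σ. exact (continuity_pt_scal _ 16 σ (Cab σ)).
  - intros σ. apply Rmult_le_pos; [left; apply Rinv_0_lt_compat; auto | apply Rabs_pos].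
  - intros σ. pose proof (Rabs_pos (alpha' σ)). unfold β. lra.
  - intros σ Hσ. unfold Y. rewrite energy_forcing_identity by lra. fold A.
    rewrite (RI_ext _ Wc) by (try lra; intros; symmetry; apply EWc; lra).
    pose proof (abs_RInt_le Wc 0 σ ltac:(lra) (exRI_cont Wc 0 σ CWc)).
    pose proof (Rle_abs (- RInt Wc 0 σ)). rewrite Rabs_Ropp in *. lra.
  - intros σ Hσ. rewrite EWc by lra.
    eapply Rle_trans; [apply forcing_bound; lra|]. unfold k, β.
    pose proof (YE σ Hσ). pose proof (entropy_nonneg σ ltac:(lra)).
    assert (0 <= / alow * Rabs (alpha' σ))
      by (apply Rmult_le_pos; [left; apply Rinv_0_lt_compat; auto | apply Rabs_pos]).
    nra. }
assert (exab : ex_RInt (fun σ => Rabs (alpha' σ)) 0 t) by (apply exRI_cont; auto).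
assert (Rb : RInt β 0 t <= 16 * L).
{ unfold β. rewrite RI_scal by auto. pose proof (alpha'_L1 t ltac:(lra)). lra. }
assert (Rk : RInt k 0 t <= L / alow).
{ unfold k. rewrite RI_scal by auto. pose proof (alpha'_L1 t ltac:(lra)).
  unfold Rdiv. rewrite Rmult_comm. apply Rmult_le_compat_r; auto.
  left; apply Rinv_0_lt_compat; auto. }
assert (L0 : 0 <= L)
  by (pose proof (alpha'_L1 0 (Rle_refl 0)) as HL0; rewrite RI_point in HL0; exact HL0).
assert (YB : Y t <= (Rabs A + 16 * L) * exp (L / alow))
  by (eapply Rle_trans; [exact Gr | apply gronwall_bound_mono; lra]).
unfold Y in YB. rewrite energy_split in YB by lra.
pose proof (entropy_nonneg t Ht). pose proof (dissipated_nonneg t Ht). lra.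
Qed.

End SolutionEstimates.

Theorem mainTheorem9 :
  forall (u0 v0 alpha : R -> R) (alpha_low : R),
    (* data of Theorem 2, case epsilon = 0 *)
    (forall x, 0 <= x <= 1 -> 0 < u0 x) ->
    H2_01 u0 -> H2_01 v0 ->
    u0 0 = alpha 0 -> u0 1 = alpha 0 ->
    smooth alpha ->
    0 < alpha_low -> (forall t, 0 <= t -> alpha_low <= alpha t) ->
    L1_Rplus (Derive alpha) -> L1_Rplus (Derive_n alpha 2) ->
    let vbar := RInt v0 0 1 in
    exists C : R, 0 < C /\
      forall (T : R) (u v ux vx : R -> R -> R),
        0 < T ->
        classical_solution alpha u0 v0 T u v ux vx ->
        forall t, 0 <= t < T ->
          RInt (fun x => v x t) 0 1 = vbar /\
          rel_entropy u alpha t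
            + L2sq01 (fun x => v x t - vbar)
            + RInt (fun tau => RInt (fun x => (ux x tau) ^ 2 / u x tau) 0 1) 0 t
          <= C.
Proof.
intros u0 v0 alpha alow _ _ _ _ _ Hsmooth Halow Hlow HL1 _ vbar.
set (alpha' := Derive alpha).
assert (Dal : forall t, is_derive alpha t (alpha' t))
  by (intros t; apply Derive_correct, (Hsmooth 0%nat t)).
assert (Cal' : forall t, continuity_pt alpha' t)
  by (intros t; apply continuity_pt_filterlim, (ex_derive_continuous _ _ (Hsmooth 1%nat t))).
destruct (LebesgueTransfer.L1_primitive_bound alpha' Cal' HL1) as [L [HL0 HL]].
set (A := RInt (fun x => ent_density (u0 x) (alpha 0) + /2 * (v0 x - vbar) ^ 2) 0 1).
exists (2 * ((Rabs A + 16 * L) * exp (L / alow)) + 1). split.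
{ pose proof (exp_pos (L / alow)). pose proof (Rabs_pos A). nra. }
intros T u v ux vx _ Hsol t Ht.
destruct Hsol as (Cu & Cv & Cux & Cvx & Hxd & (ut & vt & uxx & Cut & Cvt & Cuxx & Heq)
  & Hinit & Hbd & Hpos).
split; [exact (mass_conservation alpha u0 v0 T u v ux vx ut vt uxx
                 Cu Cv Cux Cvt Hxd Heq Hinit Hbd t Ht) |].
assert (Hbound := energy_bound alpha alpha' alow L T u v ux vx ut vt uxx Halow Hlow Dal Cal' HL
  Cu Cv Cux Cvx Cut Cvt Cuxx Hxd Heq Hbd Hpos vbar t Ht).
replace (RInt (fun x => energy alpha u v vbar x 0) 0 1) with A in Hbound.
- unfold rel_entropy, L2sq01. unfold entropy_at, dissipation in Hbound. lra.
- apply RI_ext; [lra|]. intros x Hx. unfold energy.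
  destruct (Hinit x Hx) as [-> ->]. reflexivity.
Qed.
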